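(* Let $a,b,c>0$ and let $F(x)=F(a,b;c;x)$ for $|x|<1$. Then: (1) If $ab/(a+b+1)<c$, then $\log F(x)$ is convex on $(0,1)$. In particular, $F((x+y)/2)\le\sqrt{F(x)F(y)}$ for all $x,y\in(0,1)$, with equality if and only if $x=y$. (2) If $(a-c)(b-c)>0$, then $t\mapsto\log F(1-e^{-t})$ is concave on $(0,\infty)$. In particular, $\sqrt{F(x)F(y)}\le F\big(1-\sqrt{(1-x)(1-y)}\big)$ for all $x,y\in(0,1)$, with equality if and only if $x=y$. (3) If $a+b\ge c$, then $t\mapsto F(1-e^{-t})$ is convex on $(0,\infty)$. In particular, $F\big(1-\sqrt{(1-x)(1-y)}\big)\le (F(x)+F(y))/2$ for all $x,y\in(0,1)$, with equality if and only if $x=y$.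
   Context: $F(a,b;c;x)={}_2F_1(a,b;c;x)=\sum_{n=0}^\infty\frac{(a,n)(b,n)}{(c,n)\,n!}x^n$ for $|x|<1$ is the Gaussian hypergeometric function, where $(a,0)=1$ and $(a,n)=a(a+1)\cdots(a+n-1)$ for $n\ge1$. *)

From Stdlib Require Import Reals.
From Coquelicot Require Import Coquelicot.
Open Scope R_scope.

Fixpoint poch (a : R) (n : nat) : R :=
  match n with
  | O => 1
  | S k => poch a k * (a + INR k)
  end.

Definition hyp_coef (a b c : R) (n : nat) : R :=
  poch a n * poch b n / (poch c n * INR (Factorial.fact n)).

Definition hyp2F1 (a b c x : R) : R :=
  Series (fun n => hyp_coef a b c n * x ^ n).

Definition convex_on (P : R -> Prop) (f : R -> R) : Prop :=
  forall x y t, P x -> P y -> 0 <= t <= 1 ->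
    f (t * x + (1 - t) * y) <= t * f x + (1 - t) * f y.

Definition concave_on (P : R -> Prop) (f : R -> R) : Prop :=
  forall x y t, P x -> P y -> 0 <= t <= 1 ->
    t * f x + (1 - t) * f y <= f (t * x + (1 - t) * y).

Definition unit_open (x : R) : Prop := 0 < x < 1.
Definition pos_open (t : R) : Prop := 0 < t.

(* Write C_n for the coefficients of F and r_n = (a+n)(b+n)/(c+n), so that
   (n+1) C_(n+1) = r_n C_n.  Then F' = sum r_n C_n x^n and
   (1-x) F' = sum (r_n - n) C_n x^n, which is the t-derivative of
   F(1 - e^(-t)) at x = 1 - e^(-t).  If A_n = r_n B_n with B_n > 0 and r_n
   strictly increasing, then sum A_n x^n / sum B_n x^n is strictly increasing
   on [0,1).  The hypothesis of (1) makes r_n increase, so (log F)' increases;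
   that of (2) makes r_n - n decrease, so the t-derivative of
   log F(1 - e^(-t)) decreases; under (3) every r_n - n is positive, so the
   t-derivative of F(1 - e^(-t)) increases.  A strictly increasing derivative
   gives strict convexity, and the midpoint inequalities are strict convexity
   at the midpoint, read through the substitution x = 1 - e^(-t). *)

From Stdlib Require Import Reals Lra Lia Psatz.
From Coquelicot Require Import Coquelicot.
Open Scope R_scope.

Definition is_interval (P : R -> Prop) : Prop :=
  forall x y z, P x -> P y -> x <= z <= y -> P z.

Definition strictly_convex_on (P : R -> Prop) (f : R -> R) : Prop :=
  forall x y t, P x -> P y -> x <> y -> 0 < t < 1 ->
    f (t * x + (1 - t) * y) < t * f x + (1 - t) * f y.

Lemma strictly_convex_on_of_derive_increasing (P : R -> Prop) (f f' : R -> R) :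
  is_interval P ->
  (forall x, P x -> is_derive f x (f' x)) ->
  (forall x y, P x -> P y -> x < y -> f' x < f' y) ->
  strictly_convex_on P f.
Proof.
  intros HP Hf Hf'.
  assert (Hlt : forall x y t, P x -> P y -> x < y -> 0 < t < 1 ->
            f (t * x + (1 - t) * y) < t * f x + (1 - t) * f y).
  { intros x y t Px Py Hxy Ht.
    set (z := t * x + (1 - t) * y).
    assert (Hxz : x < z) by (unfold z; nra).
    assert (Hzy : z < y) by (unfold z; nra).
    assert (Hd : forall u, x <= u <= y -> derivable_pt_lim f u (f' u)).
    { intros u Hu. apply is_derive_Reals, Hf, (HP x y); auto. }
    destruct (MVT_cor2 f f' x z Hxz) as [c1 [E1 Hc1]]; [intros u Hu; apply Hd; lra|].
    destruct (MVT_cor2 f f' z y Hzy) as [c2 [E2 Hc2]]; [intros u Hu; apply Hd; lra|].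
    assert (P c1) by (apply (HP x y); auto; lra).
    assert (P c2) by (apply (HP x y); auto; lra).
    assert (Hc : f' c1 < f' c2) by (apply Hf'; auto; lra).
    assert (Hgap : t * f x + (1 - t) * f y - f z = t * (1 - t) * (y - x) * (f' c2 - f' c1)).
    { replace (t * f x + (1 - t) * f y - f z)
        with (- t * (f z - f x) + (1 - t) * (f y - f z)) by ring.
      rewrite E1, E2. unfold z. ring. }
    assert (0 < t * (1 - t) * (y - x) * (f' c2 - f' c1))
      by (repeat apply Rmult_lt_0_compat; lra).
    lra. }
  intros x y t Px Py Hne Ht.
  destruct (Rlt_or_le x y) as [Hxy|Hyx]; [now apply Hlt|].
  replace (t * x + (1 - t) * y) with ((1 - t) * y + (1 - (1 - t)) * x) by ring.
  pose proof (Hlt y x (1 - t) Py Px ltac:(lra) ltac:(lra)). lra.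
Qed.

Lemma convex_on_of_strictly_convex_on (P : R -> Prop) (f : R -> R) :
  strictly_convex_on P f -> convex_on P f.
Proof.
  intros Hf x y t Px Py Ht.
  destruct (Req_dec x y) as [<-|Hne].
  { replace (t * x + (1 - t) * x) with x by ring. lra. }
  destruct (Req_dec t 0) as [->|Ht0].
  { replace (0 * x + (1 - 0) * y) with y by ring. lra. }
  destruct (Req_dec t 1) as [->|Ht1].
  { replace (1 * x + (1 - 1) * y) with x by ring. lra. }
  left. apply Hf; auto; lra.
Qed.

Lemma strictly_convex_on_midpoint (P : R -> Prop) (f : R -> R) x y :
  strictly_convex_on P f -> P x -> P y -> x <> y -> f ((x + y) / 2) < (f x + f y) / 2.
Proof.
  intros Hf Px Py Hne.
  replace ((x + y) / 2) with (/ 2 * x + (1 - / 2) * y) by field.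
  pose proof (Hf x y (/ 2) Px Py Hne ltac:(lra)). lra.
Qed.

Lemma concave_on_of_convex_on_opp (P : R -> Prop) (f : R -> R) :
  convex_on P (fun x => - f x) -> concave_on P f.
Proof. intros Hf x y t Px Py Ht. pose proof (Hf x y t Px Py Ht). lra. Qed.

Lemma le_and_eq_iff_of_lt (x y u v : R) :
  (x = y -> u = v) -> (x <> y -> u < v) -> u <= v /\ (u = v <-> x = y).
Proof.
  intros Heq Hlt. destruct (Req_dec x y) as [Hxy|Hxy].
  - rewrite (Heq Hxy). split; [lra|tauto].
  - pose proof (Hlt Hxy). split; [lra|]. split; intros; [lra|contradiction].
Qed.

Lemma is_series_Rext (u v : nat -> R) l :
  (forall n, u n = v n) -> is_series u l -> is_series v l.
Proof. exact (is_series_ext u v l). Qed.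

Lemma is_series_Rminus (u v : nat -> R) lu lv :
  is_series u lu -> is_series v lv -> is_series (fun n => u n - v n) (lu - lv).
Proof. exact (is_series_minus u v lu lv). Qed.

Lemma is_series_Ropp (u : nat -> R) l :
  is_series u l -> is_series (fun n => - u n) (- l).
Proof. exact (is_series_opp u l). Qed.

Lemma is_series_Rmult_l (k : R) (u : nat -> R) l :
  is_series u l -> is_series (fun n => k * u n) (k * l).
Proof. exact (is_series_scal_l k u l). Qed.

Lemma is_series_partial_sum_le (u : nat -> R) l N :
  is_series u l -> (forall n, 0 <= u n) -> sum_f_R0 u N <= l.
Proof. intros Hu Hpos. apply sum_incr; [apply is_series_Reals|]; assumption. Qed.

Lemma pow_mul_pow_le x y k m :
  0 <= x <= y -> (k <= m)%nat -> x ^ m * y ^ k <= y ^ m * x ^ k.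
Proof.
  intros Hxy Hkm. replace m with (k + (m - k))%nat by lia. rewrite !pow_add.
  pose proof (pow_incr x y (m - k) Hxy).
  pose proof (pow_le x k (proj1 Hxy)).
  pose proof (pow_le x (m - k) (proj1 Hxy)).
  assert (0 <= x ^ k * y ^ k) by (apply Rmult_le_pos; auto; apply pow_le; lra).
  nra.
Qed.

Lemma is_series_lt_of_pos_coef (u : nat -> R) x y Sx Sy :
  0 <= x < y -> (forall n, 0 <= u n) -> 0 < u 1%nat ->
  is_series (fun n => u n * x ^ n) Sx -> is_series (fun n => u n * y ^ n) Sy -> Sx < Sy.
Proof.
  intros Hxy Hu Hu1 HSx HSy.
  assert (Hle := is_series_partial_sum_le _ _ 1 (is_series_Rminus _ _ _ _ HSy HSx)).
  simpl in Hle.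
  assert (Hterm : forall n, 0 <= u n * y ^ n - u n * x ^ n).
  { intros n. pose proof (pow_incr x y n ltac:(lra)). pose proof (Hu n). nra. }
  specialize (Hle Hterm). nra.
Qed.

Section PowerSeriesRatio.

Variables (A B r : nat -> R) (x y : R).
Hypotheses (Hxy : 0 <= x < y) (HB : forall n, 0 < B n)
  (HA : forall n, A n = r n * B n) (Hr : forall n, r n < r (S n)).

Let partial (D : nat -> R) (z : R) (N : nat) : R := sum_f_R0 (fun n => D n * z ^ n) N.

Let cross (N : nat) : R := partial A y N * partial B x N - partial A x N * partial B y N.

Lemma cross_le_succ N : cross N <= cross (S N).
Proof.
  (* cross (S N) - cross N is the sum of the nonnegative terms [term k], k <= N. *)
  set (p := y ^ S N). set (q := x ^ S N).
  set (term := fun k => (A (S N) * B k - A k * B (S N)) * (p * x ^ k - q * y ^ k)).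
  assert (Hexpand : forall M, sum_f_R0 term M =
    A (S N) * p * partial B x M - A (S N) * q * partial B y M
    - B (S N) * p * partial A x M + B (S N) * q * partial A y M).
  { unfold term, partial. induction M as [|M IH]; simpl sum_f_R0; [ring|]. rewrite IH. ring. }
  assert (Hterm : forall k, (k <= N)%nat -> 0 <= term k).
  { intros k Hk. unfold term. apply Rmult_le_pos.
    - rewrite !HA. pose proof (growing_prop r (S N) k (fun n => Rlt_le _ _ (Hr n)) ltac:(lia)).
      pose proof (HB k). pose proof (HB (S N)).
      assert (0 <= B k * B (S N)) by (apply Rmult_le_pos; lra). nra.
    - pose proof (pow_mul_pow_le x y k (S N) ltac:(lra) ltac:(lia)). unfold p, q. lra. }
  assert (Hsum := sum_Rle (fun _ => 0) term N Hterm).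
  rewrite sum_cte, Rmult_0_l, Hexpand in Hsum.
  unfold cross, partial in *. rewrite !tech5. fold p q. nra.
Qed.

Lemma cross_1_pos : 0 < cross 1.
Proof.
  unfold cross, partial. simpl. rewrite !HA.
  pose proof (HB 0%nat). pose proof (HB 1%nat). pose proof (Hr 0%nat).
  assert (0 < B 0%nat * B 1%nat * (r 1%nat - r 0%nat) * (y - x))
    by (repeat apply Rmult_lt_0_compat; lra).
  nra.
Qed.

Lemma is_series_ratio_lt (SAx SAy SBx SBy : R) :
  is_series (fun n => A n * x ^ n) SAx -> is_series (fun n => A n * y ^ n) SAy ->
  is_series (fun n => B n * x ^ n) SBx -> is_series (fun n => B n * y ^ n) SBy ->
  SAx / SBx < SAy / SBy.
Proof.
  intros HAx HAy HBx HBy.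
  assert (Hlim : is_lim_seq cross (SAy * SBx - SAx * SBy)).
  { unfold cross, partial.
    apply is_lim_seq_minus'; apply is_lim_seq_mult'; apply is_lim_seq_Reals, is_series_Reals;
      assumption. }
  assert (Hcross : cross 1 <= SAy * SBx - SAx * SBy).
  { change (Rbar_le (cross 1) (SAy * SBx - SAx * SBy)).
    apply (is_lim_seq_le_loc (fun _ => cross 1%nat) cross); [|apply is_lim_seq_const|exact Hlim].
    exists 1%nat. intros N HN. induction HN as [|N _ IH]; [lra|].
    pose proof (cross_le_succ N). lra. }
  pose proof cross_1_pos.
  assert (HBpos : forall z S, 0 <= z -> is_series (fun n => B n * z ^ n) S -> 0 < S).
  { intros z S Hz HS. pose proof (HB 0%nat).
    assert (Hle := is_series_partial_sum_le _ _ 0 HS). simpl in Hle.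
    enough (B 0%nat * 1 <= S) by lra. apply Hle.
    intros n. pose proof (HB n). pose proof (pow_le z n Hz). nra. }
  pose proof (HBpos x SBx ltac:(lra) HBx). pose proof (HBpos y SBy ltac:(lra) HBy).
  apply (Rmult_lt_reg_r (SBx * SBy)); [nra|].
  replace (SAx / SBx * (SBx * SBy)) with (SAx * SBy) by (field; lra).
  replace (SAy / SBy * (SBx * SBy)) with (SAy * SBx) by (field; lra).
  lra.
Qed.

End PowerSeriesRatio.

Lemma exp_neg_bounds t : 0 < t -> 0 < exp (- t) < 1.
Proof.
  intros Ht. split; [apply exp_pos|]. rewrite <- exp_0. apply exp_increasing. lra.
Qed.

Lemma is_derive_one_sub_exp_neg t : is_derive (fun t => 1 - exp (- t)) t (exp (- t)).
Proof. auto_derive; [exact I|ring]. Qed.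

Lemma one_sub_exp_neg_ln x : 0 < x < 1 ->
  0 < - ln (1 - x) /\ 1 - exp (- - ln (1 - x)) = x.
Proof.
  intros Hx. split.
  - assert (ln (1 - x) < ln 1) by (apply ln_increasing; lra). rewrite ln_1 in *. lra.
  - rewrite Ropp_involutive, exp_ln by lra. ring.
Qed.

Lemma sqrt_mul_eq_exp_mean_ln u v : 0 < u -> 0 < v -> sqrt (u * v) = exp ((ln u + ln v) / 2).
Proof.
  intros Hu Hv.
  replace (u * v) with (exp ((ln u + ln v) / 2) * exp ((ln u + ln v) / 2)).
  - apply sqrt_square, Rlt_le, exp_pos.
  - rewrite <- exp_plus. replace ((ln u + ln v) / 2 + (ln u + ln v) / 2) with (ln u + ln v) by field.
    rewrite exp_plus, !exp_ln; auto.
Qed.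

Lemma one_sub_exp_neg_mean_ln x y : 0 < x < 1 -> 0 < y < 1 ->
  1 - exp (- ((- ln (1 - x) + - ln (1 - y)) / 2)) = 1 - sqrt ((1 - x) * (1 - y)).
Proof.
  intros Hx Hy. rewrite sqrt_mul_eq_exp_mean_ln by lra. do 3 f_equal. field.
Qed.

Lemma poch_pos a n : 0 < a -> 0 < poch a n.
Proof.
  intros ha. induction n as [|n IH]; simpl; [lra|].
  apply Rmult_lt_0_compat; [exact IH|]. pose proof (pos_INR n). lra.
Qed.

Definition hyp_ratio (a b c : R) (n : nat) : R := (a + INR n) * (b + INR n) / (c + INR n).

Definition hyp2F1_deriv (a b c x : R) : R := PSeries (PS_derive (hyp_coef a b c)) x.

Section Hypergeometric.

Variables a b c : R.
Hypotheses (ha : 0 < a) (hb : 0 < b) (hc : 0 < c).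

Local Notation C := (hyp_coef a b c).
Local Notation r := (hyp_ratio a b c).
Local Notation F := (hyp2F1 a b c).
Local Notation F' := (hyp2F1_deriv a b c).

Lemma hyp_coef_pos n : 0 < C n.
Proof.
  unfold hyp_coef. apply Rdiv_lt_0_compat.
  - apply Rmult_lt_0_compat; apply poch_pos; assumption.
  - apply Rmult_lt_0_compat; [apply poch_pos; assumption|apply INR_fact_lt_0].
Qed.

Lemma hyp_coef_succ n : INR (S n) * C (S n) = r n * C n.
Proof.
  unfold hyp_coef, hyp_ratio. simpl poch. rewrite fact_simpl, mult_INR, S_INR.
  pose proof (poch_pos c n hc). pose proof (INR_fact_lt_0 n). pose proof (pos_INR n).
  field. repeat split; lra.
Qed.

Lemma is_lim_seq_hyp_coef_ratio : is_lim_seq (fun n => Rabs (C (S n) / C n)) 1.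
Proof.
  set (u := fun n : nat => / (INR n + 1)).
  assert (Hu : is_lim_seq u 0).
  { apply is_lim_seq_ext with (fun n => / INR (S n)); [intros n; now rewrite S_INR|].
    apply (is_lim_seq_incr_1 (fun n => / INR n)).
    replace (Finite 0) with (Rbar_inv p_infty) by reflexivity.
    apply is_lim_seq_inv; [apply is_lim_seq_INR|discriminate]. }
  apply is_lim_seq_ext with
    (fun n => (1 + (a - 1) * u n) * (1 + (b - 1) * u n) / (1 + (c - 1) * u n)).
  - intros n. pose proof (hyp_coef_succ n) as Hsucc. pose proof (hyp_coef_pos n).
    pose proof (pos_INR n). rewrite S_INR in Hsucc.
    assert (HS : C (S n) = r n * C n / (INR n + 1)).
    { apply (Rmult_eq_reg_l (INR n + 1)); [rewrite Hsucc; field|]; lra. }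
    rewrite HS. rewrite Rabs_pos_eq.
    + unfold hyp_ratio, u. field. repeat split; lra.
    + assert (0 < r n) by (apply Rdiv_lt_0_compat; [apply Rmult_lt_0_compat|]; lra).
      apply Rlt_le, Rdiv_lt_0_compat; [apply Rdiv_lt_0_compat|]; try lra.
      now apply Rmult_lt_0_compat.
  - replace (Finite 1) with
      (Finite ((1 + (a - 1) * 0) * (1 + (b - 1) * 0) / (1 + (c - 1) * 0))) by (f_equal; field).
    apply is_lim_seq_div'; [| |lra];
      repeat first [ apply is_lim_seq_const | exact Hu
                   | apply is_lim_seq_mult' | apply is_lim_seq_plus' ].
Qed.

Lemma CV_radius_hyp_coef : CV_radius C = 1.
Proof.
  rewrite <- Rinv_1. apply CV_radius_finite_DAlembert.
  - intros n. pose proof (hyp_coef_pos n). lra.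
  - lra.
  - exact is_lim_seq_hyp_coef_ratio.
Qed.

Lemma is_derive_hyp2F1 x : Rabs x < 1 -> is_derive F x (F' x).
Proof. intros Hx. apply is_derive_PSeries. rewrite CV_radius_hyp_coef. exact Hx. Qed.

Lemma is_series_hyp2F1 x : Rabs x < 1 -> is_series (fun n => C n * x ^ n) (F x).
Proof.
  intros Hx. apply is_pseries_R, PSeries_correct, CV_radius_inside.
  rewrite CV_radius_hyp_coef. exact Hx.
Qed.

Lemma is_series_hyp2F1_deriv x : Rabs x < 1 -> is_series (fun n => r n * C n * x ^ n) (F' x).
Proof.
  intros Hx. apply (is_series_Rext (fun n => PS_derive C n * x ^ n)).
  { intros n. unfold PS_derive. now rewrite hyp_coef_succ. }
  apply is_pseries_R, PSeries_correct, ex_pseries_derive.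
  rewrite CV_radius_hyp_coef. exact Hx.
Qed.

Lemma is_series_one_sub_mul_hyp2F1_deriv x : Rabs x < 1 ->
  is_series (fun n => (r n - INR n) * C n * x ^ n) ((1 - x) * F' x).
Proof.
  intros Hx.
  assert (Hshift : is_series (fun n => INR n * C n * x ^ n) (x * F' x)).
  { apply is_series_decr_1.
    match goal with |- is_series _ ?l => replace l with (x * F' x) end.
    2:{ change (x * F' x = x * F' x + - (INR 0 * C 0%nat * x ^ 0)). simpl. ring. }
    apply (is_series_Rext (fun n => x * (r n * C n * x ^ n))).
    { intros n. rewrite <- hyp_coef_succ. simpl. ring. }
    apply is_series_Rmult_l, is_series_hyp2F1_deriv, Hx. }
  replace ((1 - x) * F' x) with (F' x - x * F' x) by ring.
  apply (is_series_Rext (fun n => r n * C n * x ^ n - INR n * C n * x ^ n)).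
  { intros n. ring. }
  apply is_series_Rminus; [apply is_series_hyp2F1_deriv, Hx|exact Hshift].
Qed.

Lemma hyp2F1_pos x : 0 <= x < 1 -> 0 < F x.
Proof.
  intros Hx. pose proof (hyp_coef_pos 0%nat).
  assert (Hle := is_series_partial_sum_le _ _ 0
                   (is_series_hyp2F1 x ltac:(rewrite Rabs_pos_eq; lra))).
  simpl in Hle. enough (C 0%nat * 1 <= F x) by lra. apply Hle.
  intros n. pose proof (hyp_coef_pos n). pose proof (pow_le x n ltac:(lra)). nra.
Qed.

Lemma hyp_ratio_lt_succ n : a * b < c * (a + b + 1) -> r n < r (S n).
Proof.
  intros Hcond. unfold hyp_ratio. rewrite S_INR. pose proof (pos_INR n).
  apply Rminus_lt_0.
  replace ((a + (INR n + 1)) * (b + (INR n + 1)) / (c + (INR n + 1))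
           - (a + INR n) * (b + INR n) / (c + INR n))
    with ((c * (a + b + 1) - a * b + INR n * INR n + INR n + 2 * c * INR n)
          / ((c + INR n) * (c + INR n + 1))) by (field; lra).
  apply Rdiv_lt_0_compat; [nra|]. apply Rmult_lt_0_compat; lra.
Qed.

Lemma hyp_ratio_sub_succ_lt n :
  (a - c) * (b - c) > 0 -> r (S n) - INR (S n) < r n - INR n.
Proof.
  intros Hcond. unfold hyp_ratio. rewrite S_INR. pose proof (pos_INR n).
  apply Rminus_lt_0.
  replace ((a + INR n) * (b + INR n) / (c + INR n) - INR n
           - ((a + (INR n + 1)) * (b + (INR n + 1)) / (c + (INR n + 1)) - (INR n + 1)))
    with ((a - c) * (b - c) / ((c + INR n) * (c + INR n + 1))) by (field; lra).
  apply Rdiv_lt_0_compat; [lra|]. apply Rmult_lt_0_compat; lra.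
Qed.

Lemma hyp_ratio_sub_pos n : c <= a + b -> 0 < r n - INR n.
Proof.
  intros Hcond. unfold hyp_ratio. pose proof (pos_INR n).
  replace ((a + INR n) * (b + INR n) / (c + INR n) - INR n)
    with ((a * b + INR n * (a + b - c)) / (c + INR n)) by (field; lra).
  apply Rdiv_lt_0_compat; [|lra].
  assert (0 <= INR n * (a + b - c)) by (apply Rmult_le_pos; lra). nra.
Qed.

Lemma hyp2F1_log_deriv_lt x y : a * b < c * (a + b + 1) -> 0 <= x < y -> y < 1 ->
  F' x / F x < F' y / F y.
Proof.
  intros Hcond Hxy Hy.
  assert (Ax : Rabs x < 1) by (rewrite Rabs_pos_eq; lra).
  assert (Ay : Rabs y < 1) by (rewrite Rabs_pos_eq; lra).
  apply (is_series_ratio_lt (fun n => r n * C n) C r x y Hxy hyp_coef_pos (fun n => eq_refl)).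
  - intros n. now apply hyp_ratio_lt_succ.
  - now apply is_series_hyp2F1_deriv.
  - now apply is_series_hyp2F1_deriv.
  - now apply is_series_hyp2F1.
  - now apply is_series_hyp2F1.
Qed.

Lemma one_sub_mul_hyp2F1_log_deriv_gt x y : (a - c) * (b - c) > 0 -> 0 <= x < y -> y < 1 ->
  (1 - y) * F' y / F y < (1 - x) * F' x / F x.
Proof.
  intros Hcond Hxy Hy.
  assert (HS : forall z, 0 <= z < 1 ->
    is_series (fun n => - (r n - INR n) * C n * z ^ n) (- ((1 - z) * F' z))).
  { intros z Hz. apply (is_series_Rext (fun n => - ((r n - INR n) * C n * z ^ n))).
    - intros n. ring.
    - apply is_series_Ropp, is_series_one_sub_mul_hyp2F1_deriv. rewrite Rabs_pos_eq; lra. }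
  enough (- ((1 - x) * F' x) / F x < - ((1 - y) * F' y) / F y) by (unfold Rdiv in *; lra).
  apply (is_series_ratio_lt (fun n => - (r n - INR n) * C n) C (fun n => - (r n - INR n))
           x y Hxy hyp_coef_pos (fun n => eq_refl)).
  - intros n. pose proof (hyp_ratio_sub_succ_lt n Hcond). lra.
  - apply HS; lra.
  - apply HS; lra.
  - apply is_series_hyp2F1. rewrite Rabs_pos_eq; lra.
  - apply is_series_hyp2F1. rewrite Rabs_pos_eq; lra.
Qed.

Lemma one_sub_mul_hyp2F1_deriv_lt x y : c <= a + b -> 0 <= x < y -> y < 1 ->
  (1 - x) * F' x < (1 - y) * F' y.
Proof.
  intros Hcond Hxy Hy.
  apply (is_series_lt_of_pos_coef (fun n => (r n - INR n) * C n) x y); [exact Hxy| | | |].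
  - intros n. pose proof (hyp_ratio_sub_pos n Hcond). pose proof (hyp_coef_pos n). nra.
  - apply Rmult_lt_0_compat; [apply hyp_ratio_sub_pos, Hcond|apply hyp_coef_pos].
  - apply is_series_one_sub_mul_hyp2F1_deriv. rewrite Rabs_pos_eq; lra.
  - apply is_series_one_sub_mul_hyp2F1_deriv. rewrite Rabs_pos_eq; lra.
Qed.

Lemma is_derive_ln_hyp2F1 x : 0 <= x < 1 -> is_derive (fun x => ln (F x)) x (F' x / F x).
Proof.
  intros Hx. pose proof (hyp2F1_pos x Hx).
  apply (is_derive_comp ln F); [now apply is_derive_ln|].
  apply is_derive_hyp2F1. rewrite Rabs_pos_eq; lra.
Qed.

Lemma is_derive_hyp2F1_one_sub_exp_neg t : 0 < t ->
  is_derive (fun t => F (1 - exp (- t))) t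
    ((1 - (1 - exp (- t))) * F' (1 - exp (- t))).
Proof.
  intros Ht. pose proof (exp_neg_bounds t Ht).
  replace (1 - (1 - exp (- t))) with (exp (- t)) by ring.
  apply (is_derive_comp F (fun t => 1 - exp (- t))); [|apply is_derive_one_sub_exp_neg].
  apply is_derive_hyp2F1. rewrite Rabs_pos_eq; lra.
Qed.

Lemma ln_hyp2F1_strictly_convex : a * b < c * (a + b + 1) ->
  strictly_convex_on unit_open (fun x => ln (F x)).
Proof.
  intros Hcond. apply (strictly_convex_on_of_derive_increasing _ _ (fun x => F' x / F x)).
  - intros x y z Hx Hy Hz. unfold unit_open in *. lra.
  - intros x Hx. apply is_derive_ln_hyp2F1. unfold unit_open in Hx. lra.
  - intros x y Hx Hy Hxy. apply hyp2F1_log_deriv_lt; unfold unit_open in *; lra.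
Qed.

Lemma neg_ln_hyp2F1_one_sub_exp_neg_strictly_convex : (a - c) * (b - c) > 0 ->
  strictly_convex_on pos_open (fun t => - ln (F (1 - exp (- t)))).
Proof.
  intros Hcond. apply (strictly_convex_on_of_derive_increasing _ _
    (fun t => - ((1 - (1 - exp (- t))) * F' (1 - exp (- t)) / F (1 - exp (- t))))).
  - intros s t u Hs Ht Hu. unfold pos_open in *. lra.
  - intros t Ht. pose proof (exp_neg_bounds t Ht).
    apply (is_derive_opp (fun t => ln (F (1 - exp (- t))))).
    apply (is_derive_comp ln (fun t => F (1 - exp (- t)))).
    + apply is_derive_ln, hyp2F1_pos. lra.
    + now apply is_derive_hyp2F1_one_sub_exp_neg.
  - intros s t Hs Ht Hst. pose proof (exp_neg_bounds s Hs). pose proof (exp_neg_bounds t Ht).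
    assert (exp (- t) < exp (- s)) by (apply exp_increasing; lra).
    pose proof (one_sub_mul_hyp2F1_log_deriv_gt (1 - exp (- s)) (1 - exp (- t)) Hcond
                  ltac:(lra) ltac:(lra)).
    lra.
Qed.

Lemma hyp2F1_one_sub_exp_neg_strictly_convex : c <= a + b ->
  strictly_convex_on pos_open (fun t => F (1 - exp (- t))).
Proof.
  intros Hcond. apply (strictly_convex_on_of_derive_increasing _ _
    (fun t => (1 - (1 - exp (- t))) * F' (1 - exp (- t)))).
  - intros s t u Hs Ht Hu. unfold pos_open in *. lra.
  - exact is_derive_hyp2F1_one_sub_exp_neg.
  - intros s t Hs Ht Hst. pose proof (exp_neg_bounds s Hs). pose proof (exp_neg_bounds t Ht).
    assert (exp (- t) < exp (- s)) by (apply exp_increasing; lra).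
    apply one_sub_mul_hyp2F1_deriv_lt; [exact Hcond|lra|lra].
Qed.

Lemma hyp2F1_log_convex : a * b / (a + b + 1) < c ->
  convex_on unit_open (fun x => ln (F x)) /\
  (forall x y, unit_open x -> unit_open y ->
     F ((x + y) / 2) <= sqrt (F x * F y) /\
     (F ((x + y) / 2) = sqrt (F x * F y) <-> x = y)).
Proof.
  intros Hcond. apply Rlt_div_l in Hcond; [|lra].
  pose proof (ln_hyp2F1_strictly_convex ltac:(lra)) as Hcvx.
  split; [now apply convex_on_of_strictly_convex_on|].
  intros x y Hx Hy. pose proof Hx as [Hx0 Hx1]. pose proof Hy as [Hy0 Hy1].
  pose proof (hyp2F1_pos x ltac:(lra)). pose proof (hyp2F1_pos y ltac:(lra)).
  pose proof (hyp2F1_pos ((x + y) / 2) ltac:(lra)).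
  apply le_and_eq_iff_of_lt.
  - intros <-. replace ((x + x) / 2) with x by field. now rewrite sqrt_square by lra.
  - intros Hne. rewrite sqrt_mul_eq_exp_mean_ln, <- (exp_ln (F ((x + y) / 2))) by lra.
    apply exp_increasing. exact (strictly_convex_on_midpoint _ _ _ _ Hcvx Hx Hy Hne).
Qed.

Lemma hyp2F1_one_sub_exp_neg_log_concave : (a - c) * (b - c) > 0 ->
  concave_on pos_open (fun t => ln (F (1 - exp (- t)))) /\
  (forall x y, unit_open x -> unit_open y ->
     sqrt (F x * F y) <= F (1 - sqrt ((1 - x) * (1 - y))) /\
     (sqrt (F x * F y) = F (1 - sqrt ((1 - x) * (1 - y))) <-> x = y)).
Proof.
  intros Hcond. pose proof (neg_ln_hyp2F1_one_sub_exp_neg_strictly_convex Hcond) as Hcvx.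
  split; [now apply concave_on_of_convex_on_opp, convex_on_of_strictly_convex_on|].
  intros x y Hx Hy.
  destruct (one_sub_exp_neg_ln x Hx) as [Hsx Ex].
  destruct (one_sub_exp_neg_ln y Hy) as [Hsy Ey].
  pose proof (one_sub_exp_neg_mean_ln x y Hx Hy) as Emid.
  pose proof (exp_neg_bounds ((- ln (1 - x) + - ln (1 - y)) / 2) ltac:(lra)).
  pose proof (hyp2F1_pos x ltac:(destruct Hx; lra)).
  pose proof (hyp2F1_pos y ltac:(destruct Hy; lra)).
  pose proof (hyp2F1_pos (1 - sqrt ((1 - x) * (1 - y))) ltac:(rewrite <- Emid; lra)).
  apply le_and_eq_iff_of_lt.
  - intros <-. replace (1 - sqrt ((1 - x) * (1 - x))) with x
      by (rewrite sqrt_square by (destruct Hx; lra); ring).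
    now rewrite sqrt_square by lra.
  - intros Hne.
    assert (Hsne : - ln (1 - x) <> - ln (1 - y)).
    { intros Heq. apply Hne. enough (1 - x = 1 - y) by lra.
      apply ln_inv; [destruct Hx; lra|destruct Hy; lra|lra]. }
    pose proof (strictly_convex_on_midpoint _ _ _ _ Hcvx Hsx Hsy Hsne) as Hmid.
    cbv beta in Hmid. rewrite Ex, Ey, Emid in Hmid.
    rewrite sqrt_mul_eq_exp_mean_ln, <- (exp_ln (F (1 - sqrt _))) by lra.
    apply exp_increasing. lra.
Qed.

Lemma hyp2F1_one_sub_exp_neg_convex : c <= a + b ->
  convex_on pos_open (fun t => F (1 - exp (- t))) /\
  (forall x y, unit_open x -> unit_open y ->
     F (1 - sqrt ((1 - x) * (1 - y))) <= (F x + F y) / 2 /\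
     (F (1 - sqrt ((1 - x) * (1 - y))) = (F x + F y) / 2 <-> x = y)).
Proof.
  intros Hcond. pose proof (hyp2F1_one_sub_exp_neg_strictly_convex Hcond) as Hcvx.
  split; [now apply convex_on_of_strictly_convex_on|].
  intros x y Hx Hy.
  destruct (one_sub_exp_neg_ln x Hx) as [Hsx Ex].
  destruct (one_sub_exp_neg_ln y Hy) as [Hsy Ey].
  apply le_and_eq_iff_of_lt.
  - intros <-. replace (1 - sqrt ((1 - x) * (1 - x))) with x
      by (rewrite sqrt_square by (destruct Hx; lra); ring).
    field.
  - intros Hne.
    assert (Hsne : - ln (1 - x) <> - ln (1 - y)).
    { intros Heq. apply Hne. enough (1 - x = 1 - y) by lra.
      apply ln_inv; [destruct Hx; lra|destruct Hy; lra|lra]. }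
    pose proof (strictly_convex_on_midpoint _ _ _ _ Hcvx Hsx Hsy Hsne) as Hmid.
    cbv beta in Hmid. now rewrite Ex, Ey, one_sub_exp_neg_mean_ln in Hmid.
Qed.

End Hypergeometric.

Theorem theorem1p3 (a b c : R) (ha : 0 < a) (hb : 0 < b) (hc : 0 < c) :
  let F := hyp2F1 a b c in
  (* (1) *)
  (a * b / (a + b + 1) < c ->
     convex_on unit_open (fun x => ln (F x)) /\
     (forall x y, unit_open x -> unit_open y ->
        F ((x + y) / 2) <= sqrt (F x * F y) /\
        (F ((x + y) / 2) = sqrt (F x * F y) <-> x = y))) /\
  (* (2) *)
  ((a - c) * (b - c) > 0 ->
     concave_on pos_open (fun t => ln (F (1 - exp (- t)))) /\
     (forall x y, unit_open x -> unit_open y ->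
        sqrt (F x * F y) <= F (1 - sqrt ((1 - x) * (1 - y))) /\
        (sqrt (F x * F y) = F (1 - sqrt ((1 - x) * (1 - y))) <-> x = y))) /\
  (* (3) *)
  (a + b >= c ->
     convex_on pos_open (fun t => F (1 - exp (- t))) /\
     (forall x y, unit_open x -> unit_open y ->
        F (1 - sqrt ((1 - x) * (1 - y))) <= (F x + F y) / 2 /\
        (F (1 - sqrt ((1 - x) * (1 - y))) = (F x + F y) / 2 <-> x = y))).
Proof.
  intros F. split; [|split]; intros Hcond.
  - now apply hyp2F1_log_convex.
  - now apply hyp2F1_one_sub_exp_neg_log_concave.
  - apply hyp2F1_one_sub_exp_neg_convex; [assumption..|lra].
Qed.
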